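(* Let $d\ge2$, $N\ge1$, let the inverse temperature $\beta>0$ be finite, and let $i\neq j$ be levels of the system with $E_i<E_j$. Let $\mathbf p$ be a probability vector on $d$ levels and let $\mathcal P^{(ij)}$ be the memory-assisted protocol defined in the context, using an $N$-dimensional memory with trivial Hamiltonian. Then $$\mathcal P^{(ij)}(\mathbf p\otimes\boldsymbol\eta_M)=\mathbf q\otimes\boldsymbol\eta_M$$ with $$\delta\big(\mathbf q,\Pi^{\beta}_{ij}\mathbf p\big)=\frac{(4\Gamma_i\Gamma_j)^N}{(\Gamma_i-\Gamma_j)^2}\left[\frac{|p_i\Gamma_j-p_j\Gamma_i|}{(N+1)\sqrt{\pi N}}+o\big(N^{-3/2}\big)\right],$$ where $\Gamma_i=\gamma_i/(\gamma_i+\gamma_j)$ and $\Gamma_j=\gamma_j/(\gamma_i+\gamma_j)$.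
   Context: Setting: a $d$-level system with energies $E_1,\dots,E_d$ and thermal distribution $\gamma_a=e^{-\beta E_a}/\sum_b e^{-\beta E_b}$; an $N$-dimensional memory with trivial Hamiltonian and thermal state $\boldsymbol\eta_M=(1/N,\dots,1/N)$. Joint states are probability vectors $\mathbf Q$ of length $dN$, entry $(a-1)N+k$ corresponding to system level $a$ and memory level $k$; joint thermal distribution $\Gamma_{(a-1)N+k}=\gamma_a/N$. Two-level thermalisation $T_{xy}$: $Q_x\mapsto (Q_x+Q_y)\Gamma_x/(\Gamma_x+\Gamma_y)$, $Q_y\mapsto (Q_x+Q_y)\Gamma_y/(\Gamma_x+\Gamma_y)$, other entries unchanged. Round $\mathcal R^{(ij)}_k$ ($k=1,\dots,N$): apply sequentially, for $l=1,\dots,N$, $T_{(j-1)N+k,\,(i-1)N+l}$. $\widetilde{\mathcal P}^{(ij)}=\mathcal R^{(ij)}_N\circ\cdots\circ\mathcal R^{(ij)}_1$. Memory thermalisation $\mathcal T(\mathbf Q)=\mathbf q\otimes\boldsymbol\eta_M$, $q_a=\sum_kQ_{(a-1)N+k}$. $\mathcal P^{(ij)}=\mathcal T\circ\widetilde{\mathcal P}^{(ij)}$. $\beta$-swap $\Pi^\beta_{ij}$ (for $E_i\le E_j$): the stochastic matrix acting as $p_i\mapsto(1-e^{-\beta(E_j-E_i)})p_i+p_j$, $p_j\mapsto e^{-\beta(E_j-E_i)}p_i$, and identity on all other levels. Total variation distance: $\delta(\mathbf p,\mathbf q)=\frac12\sum_a|p_a-q_a|$. *)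

(* Vectors are functions nat -> R; only the
   first (length) entries are meaningful. All indices are 0-based:
   system level a in {0..d-1}, memory level k in {0..N-1},
   joint index a*N + k (paper: (a-1)N+k with 1-based a,k). *)
From Stdlib Require Import Reals Lra Lia Arith.
Open Scope R_scope.

Definition vec := nat -> R.

Fixpoint sumR (n : nat) (f : nat -> R) : R :=
  match n with
  | O => 0
  | S m => sumR m f + f m
  end.

Definition gibbs (beta : R) (E : nat -> R) (d : nat) (a : nat) : R :=
  exp (- beta * E a) / sumR d (fun b => exp (- beta * E b)).

(* tensor product q (x) eta_M with eta_M uniform on N levels *)
Definition tensorU (N : nat) (q : vec) : vec :=
  fun x => q (x / N)%nat / INR N.

Definition jointGamma (beta : R) (E : nat -> R) (d N : nat) : vec :=
  tensorU N (gibbs beta E d).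

Definition T2 (G : vec) (x y : nat) (Q : vec) : vec :=
  fun z =>
    if Nat.eqb z x then (Q x + Q y) * G x / (G x + G y)
    else if Nat.eqb z y then (Q x + Q y) * G y / (G x + G y)
    else Q z.

Fixpoint round_steps (G : vec) (N i j k n : nat) (Q : vec) : vec :=
  match n with
  | O => Q
  | S m => T2 G (j * N + k) (i * N + m) (round_steps G N i j k m Q)
  end.

Definition round (G : vec) (N i j k : nat) (Q : vec) : vec :=
  round_steps G N i j k N Q.

Fixpoint rounds (G : vec) (N i j m : nat) (Q : vec) : vec :=
  match m with
  | O => Q
  | S m' => round G N i j m' (rounds G N i j m' Q)
  end.

Definition Ptilde (beta : R) (E : nat -> R) (d N i j : nat) (Q : vec) : vec :=
  rounds (jointGamma beta E d N) N i j N Q.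

Definition marginal (N : nat) (Q : vec) : vec :=
  fun a => sumR N (fun k => Q (a * N + k)%nat).

Definition memTherm (N : nat) (Q : vec) : vec := tensorU N (marginal N Q).

Definition Pprot (beta : R) (E : nat -> R) (d N i j : nat) (Q : vec) : vec :=
  memTherm N (Ptilde beta E d N i j Q).

Definition betaswap (beta : R) (E : nat -> R) (i j : nat) (p : vec) : vec :=
  fun a =>
    if Nat.eqb a i then (1 - exp (- beta * (E j - E i))) * p i + p j
    else if Nat.eqb a j then exp (- beta * (E j - E i)) * p i
    else p a.

Definition tvd (d : nat) (p q : vec) : R :=
  / 2 * sumR d (fun a => Rabs (p a - q a)).

Definition little_o_N32 (r : nat -> R) : Prop :=
  forall eps, 0 < eps -> exists N0 : nat, forall N : nat, (N0 <= N)%nat ->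
    Rabs (r N) <= eps / (INR N * sqrt (INR N)).

From Stdlib Require Import Reals Lra Lia Arith.
From Coquelicot Require Import Coquelicot.
Open Scope R_scope.

(* Only the memory blocks of levels i and j are touched, and every two-level
   thermalisation is linear, so the output population of level i is a linear
   functional of the input.  We compute it by transporting weights backwards
   through the schedule: with a, b the relative thermal weights of i and j, a
   weight w(m, n) satisfying w(m+1, n+1) = a w(m, n+1) + b w(m+1, n) is carried
   exactly from each step to the previous one, and the probability that m
   successes precede n failures in Bernoulli(a) trials is such a w with the
   right boundary values.  Summing these probabilities gives the output in
   closed form: it differs from the beta-swap by (p_i b - p_j a) times a defect
   that telescopes into a tail of terms C(2N, N) (ab)^N / (N+1) whose ratios
   increase to 4ab = 1 - (a-b)^2.  Hence the defect is
   C(2N, N) (ab)^N / ((N+1) (a-b)^2) * (1 + O(1/N)), and the Wallis integrals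
   give C(2N, N) / 4^N = (1 + O(1/N)) / sqrt(pi N). *)

(** * Finite sums *)

Lemma sumR_ext n f g : (forall k, (k < n)%nat -> f k = g k) -> sumR n f = sumR n g.
Proof.
  induction n as [|n IH]; intros Hfg; simpl; [reflexivity|].
  rewrite IH by (intros; apply Hfg; lia). rewrite Hfg by lia. reflexivity.
Qed.

Lemma sumR_minus n f g : sumR n (fun k => f k - g k) = sumR n f - sumR n g.
Proof. induction n as [|n IH]; simpl; [lra|rewrite IH; lra]. Qed.

Lemma sumR_scal n c f : sumR n (fun k => c * f k) = c * sumR n f.
Proof. induction n as [|n IH]; simpl; [lra|rewrite IH; lra]. Qed.

Lemma sumR_const n c : sumR n (fun _ => c) = INR n * c.
Proof. induction n as [|n IH]; simpl sumR; [simpl; lra|rewrite IH, S_INR; lra]. Qed.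

Lemma sumR_nonneg n f : (forall k, (k < n)%nat -> 0 <= f k) -> 0 <= sumR n f.
Proof.
  induction n as [|n IH]; intros Hf; simpl; [lra|].
  pose proof (Hf n ltac:(lia)). pose proof (IH ltac:(intros; apply Hf; lia)). lra.
Qed.

Lemma sumR_pos n f : (0 < n)%nat -> (forall k, (k < n)%nat -> 0 < f k) -> 0 < sumR n f.
Proof.
  destruct n as [|n]; intros Hn Hf; [lia|]. simpl.
  pose proof (sumR_nonneg n f ltac:(intros; left; apply Hf; lia)).
  pose proof (Hf n ltac:(lia)). lra.
Qed.

Lemma sumR_shift n f : sumR (S n) f = f O + sumR n (fun k => f (S k)).
Proof. induction n as [|n IH]; simpl in *; [lra|rewrite IH; lra]. Qed.

Lemma sumR_rev n f : sumR n (fun k => f (n - k)%nat) = sumR n (fun k => f (S k)).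
Proof.
  induction n as [|n IH]; [reflexivity|].
  rewrite sumR_shift. simpl sumR at 2. rewrite <- IH, Nat.sub_0_r.
  rewrite (sumR_ext n (fun k => f (S n - S k)%nat) (fun k => f (n - k)%nat)) by reflexivity.
  lra.
Qed.

Lemma sumR_change_one n l f g : (l < n)%nat ->
  (forall k, (k < n)%nat -> k <> l -> f k = g k) -> sumR n f = sumR n g + (f l - g l).
Proof.
  induction n as [|n IH]; intros Hl Hfg; [lia|]. simpl.
  destruct (Nat.eq_dec l n) as [->|Hln].
  - rewrite (sumR_ext n f g) by (intros; apply Hfg; lia). lra.
  - rewrite IH by (lia || (intros; apply Hfg; lia)). rewrite (Hfg n) by lia. lra.
Qed.

Lemma sumR_two n i j f : (i < n)%nat -> (j < n)%nat -> i <> j ->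
  (forall k, (k < n)%nat -> k <> i -> k <> j -> f k = 0) -> sumR n f = f i + f j.
Proof.
  intros Hi Hj Hij Hf.
  rewrite (sumR_change_one n i f (fun k => if Nat.eqb k i then 0 else f k)) by
    (auto; intros k _ Hk; apply Nat.eqb_neq in Hk; rewrite Hk; reflexivity).
  rewrite (sumR_change_one n j _ (fun _ => 0)) by
    (auto; intros k Hk Hkj; destruct (Nat.eqb_spec k i); auto).
  rewrite sumR_const, Nat.eqb_refl.
  destruct (Nat.eqb_spec j i); [congruence|]. lra.
Qed.

Lemma sumR_le_geometric (t : nat -> R) q n : 0 <= q < 1 ->
  (forall k, (k <= n)%nat -> 0 <= t k) -> (forall k, (k < n)%nat -> t k <= q * t (S k)) ->
  sumR (S n) t <= t n / (1 - q).
Proof.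
  intros Hq Ht Hratio. induction n as [|n IH].
  - simpl. pose proof (Ht 0%nat ltac:(lia)).
    apply Rmult_le_reg_r with (1 - q); [lra|]. field_simplify; nra.
  - change (sumR (S (S n)) t) with (sumR (S n) t + t (S n)).
    pose proof (IH ltac:(intros; apply Ht; lia) ltac:(intros; apply Hratio; lia)).
    pose proof (Hratio n ltac:(lia)). pose proof (Ht (S n) ltac:(lia)).
    assert (t n / (1 - q) <= q * t (S n) / (1 - q)).
    { unfold Rdiv. apply Rmult_le_compat_r; [left; apply Rinv_0_lt_compat|]; lra. }
    replace (t (S n) / (1 - q)) with (q * t (S n) / (1 - q) + t (S n)) by (field; lra).
    lra.
Qed.

(** * Races between successes and failures *)

(* For Bernoulli trials with success probability a and failure probability b,
   negbin a b m k is the probability that the (m+1)-th success comes right after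
   k failures, and race a b m n the probability that m successes occur before
   n failures. *)
Definition negbin (a b : R) (m k : nat) : R :=
  INR (fact (m + k)) / (INR (fact m) * INR (fact k)) * a ^ S m * b ^ k.

Definition race (a b : R) (m n : nat) : R :=
  match m with O => 1 | S m' => sumR n (negbin a b m') end.

Lemma INR_fact_pos n : 0 < INR (fact n).
Proof. apply lt_0_INR, lt_O_fact. Qed.

Ltac negbin_field :=
  change (fact 0) with 1%nat;
  rewrite ?fact_simpl, ?mult_INR, ?S_INR, ?plus_INR, ?INR_1, ?INR_0; simpl pow;
  repeat match goal with |- context [INR (fact ?n)] =>
    lazymatch goal with
    | _ : 0 < INR (fact n) |- _ => fail
    | _ => pose proof (INR_fact_pos n) end end;
  repeat match goal with |- context [INR ?n] =>
    lazymatch goal with _ : 0 <= INR n |- _ => fail | _ => pose proof (pos_INR n) end end;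
  field; repeat split; lra.

Lemma negbin_nonneg a b m k : 0 <= a -> 0 <= b -> 0 <= negbin a b m k.
Proof.
  intros Ha Hb. unfold negbin.
  pose proof (INR_fact_pos (m + k)). pose proof (INR_fact_pos m). pose proof (INR_fact_pos k).
  apply Rmult_le_pos; [apply Rmult_le_pos|apply pow_le; auto].
  - apply Rdiv_le_0_compat; [lra|nra].
  - apply pow_le; auto.
Qed.

Lemma negbin_pascal a b m k :
  negbin a b (S m) (S k) = a * negbin a b m (S k) + b * negbin a b (S m) k.
Proof.
  unfold negbin.
  replace (S m + S k)%nat with (S (S (m + k))) by lia.
  replace (m + S k)%nat with (S (m + k)) by lia.
  replace (S m + k)%nat with (S (m + k)) by lia.
  negbin_field.
Qed.

Lemma negbin_succ_ratio a b m k :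
  INR (S k) * negbin a b m (S k) = b * INR (S m + k) * negbin a b m k.
Proof.
  unfold negbin. replace (m + S k)%nat with (S (m + k)) by lia.
  replace (S m + k)%nat with (S (m + k)) by lia.
  negbin_field.
Qed.

Lemma negbin_swap_diag a b n : negbin b a n (S n) = negbin a b n (S n).
Proof. unfold negbin. simpl pow. ring. Qed.

Lemma race_succ_l a b m n : race a b (S m) (S n) = race a b (S m) n + negbin a b m n.
Proof. reflexivity. Qed.

Lemma race_rec a b m n : race a b (S m) (S n) = a * race a b m (S n) + b * race a b (S m) n.
Proof.
  induction n as [|n IH].
  - destruct m as [|m]; simpl race; unfold negbin; rewrite !Nat.add_0_r; negbin_field.
  - rewrite (race_succ_l a b m n), (race_succ_l a b m (S n)), IH.
    destruct m as [|m].
    + assert (Hstep : negbin a b 0 (S n) = b * negbin a b 0 n)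
        by (unfold negbin; simpl (0 + _)%nat; negbin_field).
      simpl race. rewrite Hstep. ring.
    + rewrite (race_succ_l a b m (S n)), negbin_pascal. ring.
Qed.

Lemma race_sym a b m n : a + b = 1 -> (0 < m + n)%nat -> race b a m n = 1 - race a b n m.
Proof.
  intros Hab. remember (m + n)%nat as s eqn:Hs. revert m n Hs.
  induction s as [s IH] using lt_wf_ind. intros [|m] [|n] Hs Hpos.
  - lia.
  - simpl. lra.
  - simpl. lra.
  - rewrite race_rec, (race_rec a b).
    destruct m as [|m].
    + rewrite (IH (S n) ltac:(lia) 1%nat n) by lia.
      change (race b a 0 (S n)) with 1. change (race a b (S n) 0) with 0. nra.
    + rewrite (IH (S m + S n)%nat ltac:(lia) (S m) (S n)) by lia.
      rewrite (IH (S (S m) + n)%nat ltac:(lia) (S (S m)) n) by lia. nra.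
Qed.

Lemma race_row_sum a b m n : a + b = 1 ->
  a * sumR n (fun k => race a b (S m) (S k)) =
  (a * INR n - b * INR (S m)) * race a b (S m) n + INR n * negbin a b m n.
Proof.
  intros Hab. induction n as [|n IH]; [simpl; lra|].
  change (sumR (S n) ?f) with (sumR n f + f n).
  rewrite Rmult_plus_distr_l, IH, !race_succ_l.
  rewrite negbin_succ_ratio, !S_INR, plus_INR, S_INR.
  replace b with (1 - a) by lra. ring.
Qed.

Lemma race_diag_row_sum a b n : a + b = 1 ->
  a * sumR (S n) (fun k => race a b (S n) (S k)) =
  INR (S n) * ((a - b) * race a b (S n) (S n) + negbin a b n (S n)).
Proof. intros Hab. rewrite race_row_sum by auto. ring. Qed.

Lemma race_diag_col_sum a b n : a + b = 1 ->
  b * sumR (S n) (fun k => race a b (S k) (S n)) =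
  INR (S n) * (b - (b - a) * (1 - race a b (S n) (S n)) - negbin a b n (S n)).
Proof.
  intros Hab.
  rewrite (sumR_ext _ _ (fun k => 1 - race b a (S n) (S k)))
    by (intros; apply race_sym; lra || lia).
  rewrite sumR_minus, sumR_const, Rmult_minus_distr_l, race_diag_row_sum by lra.
  rewrite (race_sym a b) by lra || lia. rewrite negbin_swap_diag. ring.
Qed.

Lemma race_diag_succ a b n : a + b = 1 ->
  race a b (S (S n)) (S (S n)) = race a b (S n) (S n) + (a - b) * negbin a b n (S n).
Proof.
  intros Hab.
  assert (Hdiag : negbin a b (S n) (S n) = 2 * a * negbin a b n (S n)).
  { unfold negbin. replace (S n + S n)%nat with (S (S (n + n))) by lia.
    replace (n + S n)%nat with (S (n + n)) by lia. negbin_field. }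
  rewrite race_succ_l, Hdiag, (race_sym b a) by lra || lia.
  rewrite race_succ_l, (race_sym a b) by lra || lia.
  rewrite negbin_swap_diag. replace b with (1 - a) by lra. ring.
Qed.

Lemma race_diag_tail a b n : a + b = 1 -> 0 < b -> b < a ->
  0 <= 1 - race a b (S n) (S n) <= 2 * negbin a b n (S n) / (a - b).
Proof.
  intros Hab Hb Hba. rewrite <- (race_sym a b) by lra || lia. cbn [race].
  split; [apply sumR_nonneg; intros; apply negbin_nonneg; lra|].
  assert (Hlast : INR (S n) * negbin a b n (S n) = a * (2 * INR n + 1) * negbin b a n n).
  { rewrite <- negbin_swap_diag, negbin_succ_ratio, plus_INR, S_INR. ring. }
  pose proof (negbin_nonneg b a n n ltac:(lra) ltac:(lra)). pose proof (pos_INR n).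
  apply Rle_trans with (negbin b a n n / (1 - / (2 * a))).
  - apply sumR_le_geometric.
    + split; [left; apply Rinv_0_lt_compat; lra|]. rewrite <- Rinv_1. apply Rinv_lt_contravar; lra.
    + intros; apply negbin_nonneg; lra.
    + intros k Hk. pose proof (negbin_succ_ratio b a n k) as Hratio.
      rewrite !S_INR, plus_INR, S_INR in Hratio.
      pose proof (negbin_nonneg b a n k ltac:(lra) ltac:(lra)).
      assert (Hkn : INR (S k) <= INR n) by (apply le_INR; lia). rewrite S_INR in Hkn.
      pose proof (pos_INR k). apply Rmult_le_reg_l with (2 * a * (INR k + 1)); [nra|].
      replace (2 * a * (INR k + 1) * (/ (2 * a) * negbin b a n (S k)))
        with ((INR k + 1) * negbin b a n (S k)) by (field; lra).
      assert (0 <= a * negbin b a n k * (INR n - INR k - 1))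
        by (apply Rmult_le_pos; [apply Rmult_le_pos|]; lra).
      nra.
  - replace (1 - / (2 * a)) with ((a - b) / (2 * a)) by (replace b with (1 - a) by lra; field; lra).
    replace (negbin b a n n / ((a - b) / (2 * a))) with (2 * (a * negbin b a n n) / (a - b))
      by (field; lra).
    unfold Rdiv. apply Rmult_le_compat_r; [left; apply Rinv_0_lt_compat; lra|].
    rewrite S_INR in Hlast. apply Rmult_le_compat_l; [lra|].
    apply Rmult_le_reg_l with (INR n + 1); [lra|].
    assert (0 <= a * negbin b a n n * INR n) by (apply Rmult_le_pos; [apply Rmult_le_pos|]; lra).
    nra.
Qed.

(* With memory size n+1 the protocol leaves (p_i b - p_j a) * defect a b n more
   population on level i than the beta-swap does. *)
Definition defect (a b : R) (n : nat) : R :=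
  (negbin a b n (S n) - (a - b) * (1 - race a b (S n) (S n))) / (a * b).

(** * The protocol acting on weights *)

Lemma block_neq N i j k l : i <> j -> (k < N)%nat -> (l < N)%nat -> (i * N + k <> j * N + l)%nat.
Proof. intros Hij Hk Hl. destruct (Nat.lt_total i j) as [H|[H|H]]; [nia|congruence|nia]. Qed.

Lemma tensorU_block N f c k : (k < N)%nat -> tensorU N f (c * N + k)%nat = f c / INR N.
Proof.
  intros Hk. unfold tensorU. rewrite Nat.div_add_l, Nat.div_small by lia.
  rewrite Nat.add_0_r. reflexivity.
Qed.

Lemma marginal_tensorU N f c : (1 <= N)%nat -> marginal N (tensorU N f) c = f c.
Proof.
  intros HN. unfold marginal.
  rewrite (sumR_ext N _ (fun _ => f c / INR N)) by (intros; apply tensorU_block; auto).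
  rewrite sumR_const. field. apply not_0_INR. lia.
Qed.

Lemma T2_other G x y Q z : z <> x -> z <> y -> T2 G x y Q z = Q z.
Proof.
  intros Hx Hy. unfold T2.
  destruct (Nat.eqb_spec z x); [congruence|]. destruct (Nat.eqb_spec z y); [congruence|].
  reflexivity.
Qed.

Lemma T2_at_x G x y Q : T2 G x y Q x = (Q x + Q y) * (G x / (G x + G y)).
Proof. unfold T2. rewrite Nat.eqb_refl. unfold Rdiv. ring. Qed.

Lemma T2_at_y G x y Q : x <> y -> T2 G x y Q y = (Q x + Q y) * (G y / (G x + G y)).
Proof.
  intros Hxy. unfold T2. destruct (Nat.eqb_spec y x); [congruence|].
  rewrite Nat.eqb_refl. unfold Rdiv. ring.
Qed.

Definition pairing (N i j : nat) (u v : nat -> R) (Q : vec) : R :=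
  sumR N (fun l => u l * Q (i * N + l)%nat) + sumR N (fun k => v k * Q (j * N + k)%nat).

Lemma pairing_ext N i j u v u' v' Q :
  (forall l, (l < N)%nat -> u l = u' l) -> (forall k, (k < N)%nat -> v k = v' k) ->
  pairing N i j u v Q = pairing N i j u' v' Q.
Proof.
  intros Hu Hv. unfold pairing.
  rewrite (sumR_ext N _ (fun l => u' l * Q (i * N + l)%nat)) by (intros; rewrite Hu; auto).
  rewrite (sumR_ext N (fun k => v k * _) (fun k => v' k * Q (j * N + k)%nat))
    by (intros; rewrite Hv; auto).
  reflexivity.
Qed.

Definition thermal_ratios (G : vec) (N i j : nat) (a b : R) : Prop :=
  forall k l, (k < N)%nat -> (l < N)%nat ->
    G (j * N + k)%nat / (G (j * N + k)%nat + G (i * N + l)%nat) = b /\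
    G (i * N + l)%nat / (G (j * N + k)%nat + G (i * N + l)%nat) = a.

Lemma pairing_T2 G N i j a b k l u v u' v' Q :
  i <> j -> thermal_ratios G N i j a b -> (k < N)%nat -> (l < N)%nat ->
  (forall l', (l' < N)%nat -> l' <> l -> u' l' = u l') ->
  (forall k', (k' < N)%nat -> k' <> k -> v' k' = v k') ->
  u' l = b * v k + a * u l -> v' k = b * v k + a * u l ->
  pairing N i j u v (T2 G (j * N + k) (i * N + l) Q) = pairing N i j u' v' Q.
Proof.
  intros Hij HG Hk Hl Hu Hv Hul Hvk. destruct (HG k l Hk Hl) as [Hb Ha].
  assert (Hxy : (j * N + k <> i * N + l)%nat) by (apply block_neq; auto).
  unfold pairing.
  rewrite (sumR_change_one N l _ (fun l' => u' l' * Q (i * N + l')%nat)); auto.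
  2:{ intros l' Hl' Hne. rewrite Hu, T2_other by (auto || lia || (apply block_neq; auto)).
      reflexivity. }
  rewrite (sumR_change_one N k (fun k' => v k' * T2 G (j * N + k) (i * N + l) Q (j * N + k')%nat)
    (fun k' => v' k' * Q (j * N + k')%nat)); auto.
  2:{ intros k' Hk' Hne. rewrite Hv, T2_other by (auto || lia || (apply block_neq; auto)).
      reflexivity. }
  rewrite T2_at_x, T2_at_y, Hb, Ha, Hul, Hvk by auto. ring.
Qed.

Definition race_recurrence (w : nat -> nat -> R) (a b : R) : Prop :=
  forall m n, w (S m) (S n) = a * w m (S n) + b * w (S m) n.

Section Schedule.

Variables (G : vec) (N i j : nat) (a b : R) (w : nat -> nat -> R).
Hypotheses (Hij : i <> j) (HG : thermal_ratios G N i j a b) (Hw : race_recurrence w a b).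

(* Weights just before step l of round k (both 0-based).  The first argument of
   w at an i-site, and the second at a j-site, is the number of partners the
   site still has to meet. *)
Definition weight_i (k l l' : nat) : R :=
  w (N - k - (if Nat.ltb l' l then 1 else 0))%nat (N - l')%nat.

Definition weight_j (k l k' : nat) : R :=
  w (N - k')%nat (if Nat.ltb k' k then 0 else if Nat.eqb k' k then N - l else N)%nat.

Lemma pairing_step k l Q : (k < N)%nat -> (l < N)%nat ->
  pairing N i j (weight_i k (S l)) (weight_j k (S l)) (T2 G (j * N + k) (i * N + l) Q) =
  pairing N i j (weight_i k l) (weight_j k l) Q.
Proof.
  intros Hk Hl. apply (pairing_T2 G N i j a b); auto; unfold weight_i, weight_j.
  - intros l' _ Hne. destruct (Nat.ltb_spec l' l), (Nat.ltb_spec l' (S l)); auto; lia.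
  - intros k' _ Hne. destruct (Nat.ltb k' k); auto.
    destruct (Nat.eqb_spec k' k); [lia|auto].
  - rewrite !Nat.ltb_irrefl, (proj2 (Nat.ltb_lt l (S l))), Nat.eqb_refl by lia.
    replace (N - k - 0)%nat with (S (N - k - 1)) by lia.
    replace (N - l)%nat with (S (N - S l)) by lia.
    rewrite Hw. replace (S (N - k - 1)) with (N - k)%nat by lia. ring.
  - rewrite !Nat.ltb_irrefl, (proj2 (Nat.ltb_lt l (S l))), Nat.eqb_refl by lia.
    replace (N - k)%nat with (S (N - k - 1)) at 1 by lia.
    replace (N - l)%nat with (S (N - S l)) by lia.
    rewrite Hw. replace (S (N - k - 1)) with (N - k)%nat by lia. ring.
Qed.

Lemma pairing_round_steps k l Q : (k < N)%nat -> (l <= N)%nat ->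
  pairing N i j (weight_i k l) (weight_j k l) (round_steps G N i j k l Q) =
  pairing N i j (weight_i k 0) (weight_j k 0) Q.
Proof.
  intros Hk. induction l as [|l IH]; intros Hl; [reflexivity|].
  simpl round_steps. rewrite pairing_step by lia. apply IH. lia.
Qed.

Lemma pairing_rounds m Q : (m <= N)%nat ->
  pairing N i j (weight_i m 0) (weight_j m 0) (rounds G N i j m Q) =
  pairing N i j (weight_i 0 0) (weight_j 0 0) Q.
Proof.
  induction m as [|m IH]; intros Hm; [reflexivity|].
  simpl rounds. unfold round.
  rewrite <- IH, <- (pairing_round_steps m N) by lia.
  apply pairing_ext; unfold weight_i, weight_j.
  - intros l' Hl'. destruct (Nat.ltb_spec l' 0), (Nat.ltb_spec l' N); f_equal; lia.
  - intros k' _.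
    destruct (Nat.ltb_spec k' (S m)), (Nat.ltb_spec k' m), (Nat.eqb_spec k' (S m)),
      (Nat.eqb_spec k' m); f_equal; lia.
Qed.

End Schedule.

Lemma round_steps_off_blocks G N i j k n Q z :
  (forall l, (l < n)%nat -> z <> (j * N + k)%nat /\ z <> (i * N + l)%nat) ->
  round_steps G N i j k n Q z = Q z.
Proof.
  induction n as [|n IH]; intros Hz; [reflexivity|]. simpl.
  destruct (Hz n ltac:(lia)). rewrite T2_other by auto. apply IH. intros; apply Hz; lia.
Qed.

Lemma rounds_off_blocks G N i j m Q z :
  (forall k l, (k < m)%nat -> (l < N)%nat -> z <> (j * N + k)%nat /\ z <> (i * N + l)%nat) ->
  rounds G N i j m Q z = Q z.
Proof.
  induction m as [|m IH]; intros Hz; [reflexivity|]. simpl. unfold round.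
  rewrite round_steps_off_blocks by (intros; apply Hz; lia). apply IH. intros; apply Hz; lia.
Qed.

Lemma pairing_tensorU N i j u v p :
  pairing N i j u v (tensorU N p) = p i / INR N * sumR N u + p j / INR N * sumR N v.
Proof.
  unfold pairing. rewrite <- !sumR_scal.
  f_equal; apply sumR_ext; intros; rewrite tensorU_block by auto; ring.
Qed.

Lemma pairing_const N i j x y Q :
  pairing N i j (fun _ => x) (fun _ => y) Q = x * marginal N Q i + y * marginal N Q j.
Proof. unfold pairing, marginal. rewrite !sumR_scal. reflexivity. Qed.

Lemma pairing_race_final N i j a b Q :
  pairing N i j (weight_i N (race a b) N 0) (weight_j N (race a b) N 0) Q = marginal N Q i.
Proof.
  rewrite (pairing_ext N i j _ _ (fun _ => 1) (fun _ => 0)), pairing_const; [ring| |].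
  - intros l _. unfold weight_i. rewrite Nat.sub_diag. reflexivity.
  - intros k Hk. unfold weight_j. rewrite (proj2 (Nat.ltb_lt k N)) by auto.
    replace (N - k)%nat with (S (N - k - 1)) by lia. reflexivity.
Qed.

Lemma pairing_race_initial n i j a b p : a + b = 1 -> 0 < a -> 0 < b ->
  pairing (S n) i j (weight_i (S n) (race a b) 0 0) (weight_j (S n) (race a b) 0 0)
    (tensorU (S n) p) =
  p i * ((a - b) * race a b (S n) (S n) + negbin a b n (S n)) / a +
  p j * (b - (b - a) * (1 - race a b (S n) (S n)) - negbin a b n (S n)) / b.
Proof.
  intros Hab Ha Hb. rewrite pairing_tensorU.
  replace (sumR (S n) (weight_i (S n) (race a b) 0 0))
    with (sumR (S n) (fun k => race a b (S n) (S k))).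
  2:{ rewrite <- (sumR_rev (S n) (race a b (S n))). apply sumR_ext. intros k Hk.
      unfold weight_i. destruct (Nat.ltb_spec k 0); [lia|]. rewrite !Nat.sub_0_r. reflexivity. }
  replace (sumR (S n) (weight_j (S n) (race a b) 0 0))
    with (sumR (S n) (fun k => race a b (S k) (S n))).
  2:{ rewrite <- (sumR_rev (S n) (fun m => race a b m (S n))). apply sumR_ext. intros k Hk.
      unfold weight_j. destruct (Nat.ltb_spec k 0); [lia|].
      destruct (Nat.eqb_spec k 0); [subst|]; rewrite ?Nat.sub_0_r; reflexivity. }
  pose proof (race_diag_row_sum a b n Hab) as Hrow.
  pose proof (race_diag_col_sum a b n Hab) as Hcol.
  pose proof (lt_0_INR (S n) ltac:(lia)).
  apply (Rmult_eq_reg_l (a * b)); [|nra].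
  transitivity (p i * b / INR (S n) * (a * sumR (S n) (fun k => race a b (S n) (S k))) +
                p j * a / INR (S n) * (b * sumR (S n) (fun k => race a b (S k) (S n))));
    [field; lra|].
  rewrite Hrow, Hcol. field. repeat split; lra.
Qed.

Section FinalMarginals.

Variables (G : vec) (n i j : nat) (a b : R) (p : vec).
Hypotheses (Hij : i <> j) (Hab : a + b = 1) (Hb : 0 < b) (Hba : b < a)
  (HG : thermal_ratios G (S n) i j a b).

Let N := S n.
Let Pt := rounds G N i j N (tensorU N p).

Lemma marginal_rounds_conserved : marginal N Pt i + marginal N Pt j = p i + p j.
Proof.
  assert (Hw : race_recurrence (fun _ _ => 1) a b) by (intros m k; lra).
  pose proof (pairing_rounds G N i j a b _ Hij HG Hw N (tensorU N p) (le_n N)) as Hinv.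
  unfold weight_i, weight_j in Hinv.
  rewrite pairing_const, pairing_tensorU, !sumR_const in Hinv. fold Pt in Hinv.
  assert (INR N <> 0) by (apply not_0_INR; unfold N; lia).
  rewrite !Rmult_1_l in Hinv. rewrite Hinv. field. auto.
Qed.

Lemma marginal_rounds_i :
  marginal N Pt i = (1 - b / a) * p i + p j + (p i * b - p j * a) * defect a b n.
Proof.
  pose proof (pairing_rounds G N i j a b _ Hij HG (race_rec a b) N (tensorU N p) (le_n N))
    as Hinv.
  unfold N in Hinv. rewrite pairing_race_final, pairing_race_initial in Hinv by lra.
  unfold Pt, N. rewrite Hinv. unfold defect. field. lra.
Qed.

Lemma marginal_rounds_other c : c <> i -> c <> j -> marginal N Pt c = p c.
Proof.
  intros Hci Hcj. rewrite <- (marginal_tensorU N p c) by (unfold N; lia).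
  apply sumR_ext. intros k Hk. unfold Pt. apply rounds_off_blocks.
  intros k' l Hk' Hl. split; apply block_neq; auto.
Qed.

End FinalMarginals.

(** * Asymptotics of the defect *)

(* central_ratio n = binom(2n, n) / 4^n *)
Fixpoint central_ratio (n : nat) : R :=
  match n with O => 1 | S m => central_ratio m * (2 * INR m + 1) / (2 * INR m + 2) end.

Lemma central_ratio_pos n : 0 < central_ratio n.
Proof.
  induction n as [|n IH]; simpl; [lra|]. pose proof (pos_INR n).
  apply Rdiv_lt_0_compat; [apply Rmult_lt_0_compat|]; lra.
Qed.

Lemma central_ratio_le_1 n : central_ratio n <= 1.
Proof.
  induction n as [|n IH]; simpl; [lra|]. pose proof (pos_INR n). pose proof (central_ratio_pos n).
  apply Rle_div_l; nra.
Qed.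

Lemma negbin_diag_succ a b n :
  negbin a b (S n) (S (S n)) = negbin a b n (S n) * (2 * a * b * (2 * INR n + 3) / (INR n + 2)).
Proof.
  unfold negbin. replace (S n + S (S n))%nat with (S (S (S (n + n)))) by lia.
  replace (n + S n)%nat with (S (n + n)) by lia. negbin_field.
Qed.

Lemma negbin_diag a b n : negbin a b n (S n) = central_ratio (S n) * (4 * a * b) ^ S n / 2.
Proof.
  induction n as [|n IH].
  - unfold negbin. simpl. field.
  - rewrite negbin_diag_succ, IH. cbn [central_ratio pow]. rewrite S_INR.
    pose proof (pos_INR n). field. lra.
Qed.

Definition defect_step (rho : R) (n : nat) : R :=
  central_ratio (S n) * rho ^ S n / (INR n + 2).

Definition step_ratio (rho : R) (n : nat) : R := rho * (2 * INR n + 3) / (2 * INR n + 6).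

Lemma defect_succ a b n : a + b = 1 -> 0 < a -> 0 < b ->
  defect a b n - defect a b (S n) = defect_step (4 * a * b) n.
Proof.
  intros Hab Ha Hb. unfold defect, defect_step.
  rewrite race_diag_succ, !negbin_diag by auto. cbn [central_ratio pow].
  rewrite S_INR. pose proof (pos_INR n).
  replace b with (1 - a) by lra. field. lra.
Qed.

Lemma defect_step_succ rho n : defect_step rho (S n) = step_ratio rho n * defect_step rho n.
Proof.
  unfold defect_step, step_ratio. cbn [central_ratio pow]. rewrite !S_INR.
  pose proof (pos_INR n). field. lra.
Qed.

Lemma defect_step_nonneg rho n : 0 <= rho -> 0 <= defect_step rho n.
Proof.
  intros Hrho. unfold defect_step. pose proof (central_ratio_pos (S n)). pose proof (pos_INR n).
  apply Rdiv_le_0_compat; [apply Rmult_le_pos; [lra|apply pow_le; lra]|lra].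
Qed.

Lemma step_ratio_bounds rho n : 0 <= rho ->
  0 <= step_ratio rho n <= step_ratio rho (S n) /\ step_ratio rho (S n) <= rho.
Proof.
  intros Hrho. unfold step_ratio. rewrite S_INR. pose proof (pos_INR n).
  assert (Hfrac : (2 * INR n + 3) / (2 * INR n + 6) <=
                  (2 * (INR n + 1) + 3) / (2 * (INR n + 1) + 6)).
  { replace ((2 * INR n + 3) / (2 * INR n + 6)) with (1 - 3 / (2 * INR n + 6)) by (field; lra).
    replace ((2 * (INR n + 1) + 3) / (2 * (INR n + 1) + 6))
      with (1 - 3 / (2 * (INR n + 1) + 6)) by (field; lra).
    unfold Rdiv. apply Rplus_le_compat_l, Ropp_le_contravar, Rmult_le_compat_l; [lra|].
    apply Rinv_le_contravar; lra. }
  assert ((2 * (INR n + 1) + 3) / (2 * (INR n + 1) + 6) <= 1) by (apply Rle_div_l; lra).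
  assert (0 <= (2 * INR n + 3) / (2 * INR n + 6)) by (apply Rdiv_le_0_compat; lra).
  unfold Rdiv in *. rewrite !Rmult_assoc. repeat split; nra.
Qed.

Lemma one_sub_rho a b : a + b = 1 -> 1 - 4 * a * b = (a - b) ^ 2.
Proof. intros Hab. replace b with (1 - a) by lra. ring. Qed.

Lemma rho_bounds a b : a + b = 1 -> 0 < b -> b < a -> 0 < 4 * a * b < 1.
Proof. intros Hab Hb Hba. pose proof (one_sub_rho a b Hab). split; nra. Qed.

Lemma defect_abs_le a b n : a + b = 1 -> 0 < b -> b < a ->
  Rabs (defect a b n) <= 2 * (4 * a * b) ^ n.
Proof.
  intros Hab Hb Hba. pose proof (race_diag_tail a b n Hab Hb Hba) as [Htail0 Htail].
  assert (HP : negbin a b n (S n) <= 2 * a * b * (4 * a * b) ^ n).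
  { rewrite negbin_diag. pose proof (central_ratio_le_1 (S n)).
    assert (0 <= a * b * (4 * a * b) ^ n) by (apply Rmult_le_pos; [nra|apply pow_le; nra]).
    simpl pow. nra. }
  pose proof (negbin_nonneg a b n (S n) ltac:(lra) ltac:(lra)).
  assert (Hgap : (a - b) * (1 - race a b (S n) (S n)) <= 2 * negbin a b n (S n)).
  { apply Rle_div_r in Htail; [|lra]. lra. }
  unfold defect. apply Rabs_le. split.
  - apply Rle_div_r; [nra|]. nra.
  - apply Rle_div_l; [nra|]. nra.
Qed.

Lemma nonincreasing_nonneg (g : nat -> R) C r n : 0 <= r < 1 ->
  (forall m, g (S m) <= g m) -> (forall m, - (C * r ^ m) <= g m) -> 0 <= g n.
Proof.
  intros Hr Hdecr Hlow.
  assert (Hle : forall m, g (n + m)%nat <= g n).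
  { induction m as [|m IH]; [rewrite Nat.add_0_r; lra|].
    rewrite Nat.add_succ_r. specialize (Hdecr (n + m)%nat). lra. }
  destruct (Rle_or_lt 0 (g n)) as [|Hneg]; [auto|exfalso].
  destruct (pow_lt_1_zero r ltac:(rewrite Rabs_pos_eq; lra) (- g n / (Rabs C + 1)))
    as [M HM]; [apply Rdiv_lt_0_compat; pose proof (Rabs_pos C); lra|].
  specialize (HM (n + M)%nat ltac:(lia)). rewrite Rabs_pos_eq in HM by (apply pow_le; lra).
  apply Rlt_div_r in HM; [|pose proof (Rabs_pos C); lra].
  pose proof (Hle M). pose proof (Hlow (n + M)%nat).
  pose proof (pow_le r (n + M) ltac:(lra)). pose proof (Rle_abs C). pose proof (Rabs_pos C).
  nra.
Qed.

Section TailSum.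

Variables (W K r : nat -> R) (rho C : R).
Hypotheses (HWK : forall m, W m - W (S m) = K m) (HKr : forall m, K (S m) = r m * K m)
  (HK : forall m, 0 <= K m) (Hr : forall m, 0 <= r m <= r (S m)) (Hr_rho : forall m, r m <= rho)
  (Hrho : rho < 1) (HW : forall m, Rabs (W m) <= C * rho ^ m).

Lemma tail_sum_upper n : W n <= K n / (1 - rho).
Proof.
  assert (Hrho0 : 0 <= rho) by (pose proof (Hr 0%nat); pose proof (Hr_rho 0%nat); lra).
  cut (0 <= K n / (1 - rho) - W n); [lra|].
  apply (nonincreasing_nonneg (fun m => K m / (1 - rho) - W m) C rho); [lra| |].
  - intros m. rewrite HKr. pose proof (HWK m). pose proof (HK m). pose proof (Hr_rho m).
    apply Rmult_le_reg_r with (1 - rho); [lra|].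
    rewrite !Rmult_minus_distr_r. unfold Rdiv. rewrite !Rmult_assoc, !Rinv_l by lra. nra.
  - intros m. pose proof (proj1 (Rabs_le_between _ _) (HW m)) as [_ HWm].
    assert (0 <= K m / (1 - rho)) by (apply Rdiv_le_0_compat; [apply HK|lra]). lra.
Qed.

Lemma tail_sum_lower n : K n / (1 - r n) <= W n.
Proof.
  assert (Hrho0 : 0 <= rho) by (pose proof (Hr 0%nat); pose proof (Hr_rho 0%nat); lra).
  assert (HC : 0 <= C) by (pose proof (HW 0%nat); pose proof (Rabs_pos (W 0%nat)); simpl in *; lra).
  cut (0 <= W n - K n / (1 - r n)); [lra|].
  apply (nonincreasing_nonneg (fun m => W m - K m / (1 - r m)) (C + 2 * C / (1 - rho)) rho);
    [lra| |].
  - intros m. rewrite HKr. pose proof (HWK m). pose proof (HK m).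
    pose proof (Hr m). pose proof (Hr_rho (S m)).
    assert (r m / (1 - r m) <= r m / (1 - r (S m))).
    { apply Rmult_le_compat_l; [lra|]. apply Rinv_le_contravar; lra. }
    replace (K m / (1 - r m)) with (K m + K m * (r m / (1 - r m))) by (field; lra).
    replace (r m * K m / (1 - r (S m))) with (K m * (r m / (1 - r (S m)))) by (field; lra).
    assert (K m * (r m / (1 - r m)) <= K m * (r m / (1 - r (S m))))
      by (apply Rmult_le_compat_l; lra).
    lra.
  - intros m. pose proof (proj1 (Rabs_le_between _ _) (HW m)) as [HWm HWm'].
    pose proof (proj1 (Rabs_le_between _ _) (HW (S m))) as [HWSm _].
    pose proof (HWK m). pose proof (HK m). pose proof (Hr m). pose proof (Hr_rho m).
    assert (Hpow : 0 <= rho ^ m) by (apply pow_le; lra).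
    assert (C * rho ^ S m <= C * rho ^ m)
      by (apply Rmult_le_compat_l; [lra|]; simpl; nra).
    assert (HKm : K m <= 2 * C * rho ^ m) by lra.
    assert (K m / (1 - r m) <= 2 * C * rho ^ m / (1 - rho)).
    { unfold Rdiv. apply Rmult_le_compat; try lra.
      - left; apply Rinv_0_lt_compat; lra.
      - apply Rinv_le_contravar; lra. }
    replace ((C + 2 * C / (1 - rho)) * rho ^ m) with (C * rho ^ m + 2 * C * rho ^ m / (1 - rho))
      by (field; lra).
    lra.
Qed.

End TailSum.

Lemma defect_bounds a b n : a + b = 1 -> 0 < b -> b < a ->
  defect_step (4 * a * b) n / (1 - step_ratio (4 * a * b) n) <= defect a b n <=
  defect_step (4 * a * b) n / (1 - 4 * a * b).
Proof.
  intros Hab Hb Hba. pose proof (rho_bounds a b Hab Hb Hba).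
  assert (Hr : forall m, 0 <= step_ratio (4 * a * b) m <= step_ratio (4 * a * b) (S m))
    by (intros m; apply step_ratio_bounds; lra).
  assert (Hr_rho : forall m, step_ratio (4 * a * b) m <= 4 * a * b)
    by (intros m; pose proof (step_ratio_bounds (4 * a * b) m); lra).
  split; [apply (tail_sum_lower _ _ _ (4 * a * b) 2)
         |apply (tail_sum_upper _ _ (step_ratio (4 * a * b)) _ 2)];
    solve [ intros; apply defect_succ; lra | apply defect_step_succ | apply Hr | apply Hr_rho
          | intros; apply defect_step_nonneg; lra | lra | intros; apply defect_abs_le; lra ].
Qed.

Lemma defect_nonneg a b n : a + b = 1 -> 0 < b -> b < a -> 0 <= defect a b n.
Proof.
  intros Hab Hb Hba. pose proof (rho_bounds a b Hab Hb Hba).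
  pose proof (defect_bounds a b n Hab Hb Hba) as [Hlo _].
  pose proof (step_ratio_bounds (4 * a * b) n ltac:(lra)).
  eapply Rle_trans; [|exact Hlo].
  apply Rdiv_le_0_compat; [apply defect_step_nonneg|]; lra.
Qed.

Definition wallis_integral (n : nat) : R := RInt (fun x => sin x ^ n) 0 (PI / 2).

Lemma continuous_sin_pow n x : continuous (fun x => sin x ^ n) x.
Proof. apply (@ex_derive_continuous R_AbsRing R_NormedModule). auto_derive. auto. Qed.

Lemma ex_RInt_sin_pow n : ex_RInt (fun x => sin x ^ n) 0 (PI / 2).
Proof. apply (@ex_RInt_continuous R_CompleteNormedModule). intros. apply continuous_sin_pow. Qed.

(* Integration by parts, via the antiderivative cos x * sin x ^ (n+1) of
   (n+1) sin^n - (n+2) sin^(n+2). *)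
Lemma wallis_integral_rec n :
  INR (n + 2) * wallis_integral (n + 2) = INR (n + 1) * wallis_integral n.
Proof.
  assert (Hparts :
    is_RInt (fun x => INR (n + 1) * sin x ^ n - INR (n + 2) * sin x ^ (n + 2)) 0 (PI / 2)
                (minus ((fun x => cos x * sin x ^ (n + 1)) (PI / 2))
                       ((fun x => cos x * sin x ^ (n + 1)) 0))).
  { apply (@is_RInt_derive R_CompleteNormedModule (fun x => cos x * sin x ^ (n + 1))).
    - intros x _. auto_derive; auto.
      replace (n + 2)%nat with (S (S n)) by lia. replace (n + 1)%nat with (S n) by lia.
      rewrite !S_INR. simpl Init.Nat.pred. simpl pow.
      pose proof (sin2_cos2 x) as Hpyth. unfold Rsqr in Hpyth.
      replace (cos x * (1 * cos x * ((INR n + 1) * sin x ^ n)))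
        with ((cos x * cos x) * ((INR n + 1) * sin x ^ n)) by ring.
      replace (cos x * cos x) with (1 - sin x * sin x) by lra. ring.
    - intros x _. apply (@ex_derive_continuous R_AbsRing R_NormedModule). auto_derive. auto. }
  pose proof (@RInt_correct R_CompleteNormedModule _ _ _ (ex_RInt_sin_pow n)) as Hn.
  pose proof (@RInt_correct R_CompleteNormedModule _ _ _ (ex_RInt_sin_pow (n + 2))) as Hn2.
  pose proof (@is_RInt_minus R_NormedModule _ _ _ _ _ _
    (@is_RInt_scal R_NormedModule _ _ _ (INR (n + 1)) _ Hn)
    (@is_RInt_scal R_NormedModule _ _ _ (INR (n + 2)) _ Hn2)) as Hlin.
  apply (@is_RInt_unique R_CompleteNormedModule) in Hparts.
  apply (@is_RInt_unique R_CompleteNormedModule) in Hlin.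
  unfold minus, plus, opp, scal in Hparts, Hlin. simpl in Hparts, Hlin.
  unfold mult in Hlin. simpl in Hlin.
  unfold Rminus in Hparts. rewrite Hparts, cos_PI2, cos_0, sin_0 in Hlin.
  unfold wallis_integral. replace (n + 1)%nat with (S n) in Hlin at 2 by lia.
  simpl pow in Hlin. lra.
Qed.

Lemma wallis_integral_0 : wallis_integral 0 = PI / 2.
Proof.
  unfold wallis_integral. simpl pow. rewrite (@RInt_const R_CompleteNormedModule).
  unfold scal. simpl. unfold mult. simpl. lra.
Qed.

Lemma wallis_integral_1 : wallis_integral 1 = 1.
Proof.
  unfold wallis_integral.
  assert (H : is_RInt (fun x => sin x ^ 1) 0 (PI / 2)
                (minus ((fun x => - cos x) (PI / 2)) ((fun x => - cos x) 0))).
  { apply (@is_RInt_derive R_CompleteNormedModule (fun x => - cos x)).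
    - intros x _. auto_derive; auto. simpl. ring.
    - intros x _. apply continuous_sin_pow. }
  apply (@is_RInt_unique R_CompleteNormedModule) in H. rewrite H.
  unfold minus, plus, opp. simpl. rewrite cos_PI2, cos_0. lra.
Qed.

Lemma wallis_integral_decr n : wallis_integral (S n) <= wallis_integral n.
Proof.
  unfold wallis_integral. pose proof PI_RGT_0.
  apply RInt_le; [lra|apply ex_RInt_sin_pow|apply ex_RInt_sin_pow|].
  intros x Hx. assert (0 <= sin x) by (apply sin_ge_0; lra).
  pose proof (SIN_bound x). pose proof (pow_le (sin x) n ltac:(lra)).
  simpl. nra.
Qed.

Lemma wallis_integral_even m : wallis_integral (2 * m) = PI / 2 * central_ratio m.
Proof.
  induction m as [|m IH]; [simpl; rewrite wallis_integral_0; lra|].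
  replace (2 * S m)%nat with (2 * m + 2)%nat by lia. pose proof (pos_INR m).
  apply Rmult_eq_reg_l with (INR (2 * m + 2)).
  - rewrite wallis_integral_rec, IH. cbn [central_ratio].
    rewrite !plus_INR, mult_INR. simpl (INR 2). simpl (INR 1). field. lra.
  - rewrite plus_INR, mult_INR. simpl (INR 2). lra.
Qed.

Lemma wallis_integral_odd m :
  wallis_integral (2 * m + 1) = / ((2 * INR m + 1) * central_ratio m).
Proof.
  induction m as [|m IH]; [simpl; rewrite wallis_integral_1; field|].
  replace (2 * S m + 1)%nat with (2 * m + 1 + 2)%nat by lia.
  pose proof (pos_INR m). pose proof (central_ratio_pos m).
  apply Rmult_eq_reg_l with (INR (2 * m + 1 + 2)).
  - rewrite wallis_integral_rec, IH. cbn [central_ratio]. rewrite S_INR.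
    rewrite !plus_INR, mult_INR. simpl (INR 2). simpl (INR 1). field. lra.
  - rewrite !plus_INR, mult_INR. simpl (INR 2). simpl (INR 1). lra.
Qed.

Lemma central_ratio_sqrt_bounds N : (1 <= N)%nat ->
  1 - / (2 * INR N) <= central_ratio N * sqrt (PI * INR N) <= 1.
Proof.
  intros HN. destruct N as [|m]; [lia|].
  pose proof (wallis_integral_decr (2 * S m)) as Hup.
  pose proof (wallis_integral_decr (2 * m + 1)) as Hdown.
  replace (S (2 * S m)) with (2 * S m + 1)%nat in Hup by lia.
  replace (S (2 * m + 1)) with (2 * S m)%nat in Hdown by lia.
  rewrite wallis_integral_odd, wallis_integral_even in Hup, Hdown.
  assert (Hc : (2 * INR m + 1) * central_ratio m = 2 * INR (S m) * central_ratio (S m)).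
  { cbn [central_ratio]. rewrite S_INR. pose proof (pos_INR m). field. lra. }
  rewrite Hc in Hdown.
  set (x := INR (S m)) in *. set (c := central_ratio (S m)) in *.
  assert (Hx : 1 <= x) by (apply (le_INR 1); lia).
  pose proof (central_ratio_pos (S m)). pose proof PI_RGT_0. fold c in H.
  assert (Hlo : 1 <= PI / 2 * c * ((2 * x + 1) * c)).
  { rewrite <- (Rinv_l ((2 * x + 1) * c)) at 1 by nra. apply Rmult_le_compat_r; nra. }
  assert (Hhi : PI / 2 * c * (2 * x * c) <= 1).
  { rewrite <- (Rinv_l (2 * x * c)) at 1 by nra. apply Rmult_le_compat_r; nra. }
  set (s := c * sqrt (PI * x)).
  assert (Hs0 : 0 <= s) by (apply Rmult_le_pos; [lra|apply sqrt_pos]).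
  assert (Hs2 : s * s = PI * x * c * c).
  { unfold s. replace (c * sqrt (PI * x) * (c * sqrt (PI * x)))
      with (c * c * (sqrt (PI * x) * sqrt (PI * x))) by ring.
    rewrite sqrt_sqrt by nra. ring. }
  set (u := / (2 * x)).
  assert (Hu : 2 * x * u = 1) by (unfold u; field; lra).
  assert (0 < u <= / 2) by (split; [unfold u; apply Rinv_0_lt_compat; lra|
    unfold u; apply Rinv_le_contravar; lra]).
  split; nra.
Qed.

Lemma step_ratio_gap rho n : 0 <= rho < 1 ->
  1 - 3 / (2 * INR (S n) * (1 - rho)) <= (1 - rho) / (1 - step_ratio rho n) <= 1.
Proof.
  intros Hrho. pose proof (step_ratio_bounds rho n (proj1 Hrho)) as [[Hr0 Hr1] Hr2].
  pose proof (step_ratio_bounds rho (S n) (proj1 Hrho)) as [_ Hr3].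
  assert (Hr : step_ratio rho n <= rho) by lra.
  assert (Hgap : rho - step_ratio rho n <= 3 / (2 * INR (S n))).
  { unfold step_ratio. rewrite S_INR. pose proof (pos_INR n).
    replace (rho - rho * (2 * INR n + 3) / (2 * INR n + 6)) with (rho * (3 / (2 * INR n + 6)))
      by (field; lra).
    apply Rle_trans with (1 * (3 / (2 * INR n + 6))).
    - apply Rmult_le_compat_r; [apply Rdiv_le_0_compat|]; lra.
    - rewrite Rmult_1_l. unfold Rdiv. apply Rmult_le_compat_l; [lra|].
      apply Rinv_le_contravar; lra. }
  assert (HN : 1 <= INR (S n)) by (apply (le_INR 1); lia).
  split; [|apply Rle_div_l; lra].
  replace ((1 - rho) / (1 - step_ratio rho n))
    with (1 - (rho - step_ratio rho n) / (1 - step_ratio rho n)) by (field; lra).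
  replace (3 / (2 * INR (S n) * (1 - rho))) with (3 / (2 * INR (S n)) / (1 - rho)) by (field; lra).
  apply Rplus_le_compat_l, Ropp_le_contravar.
  apply Rle_trans with ((rho - step_ratio rho n) / (1 - rho)).
  - unfold Rdiv. apply Rmult_le_compat_l; [lra|]. apply Rinv_le_contravar; lra.
  - unfold Rdiv. apply Rmult_le_compat_r; [left; apply Rinv_0_lt_compat|]; lra.
Qed.

Lemma defect_step_scaled rho n : 0 < rho ->
  defect_step rho n / rho ^ S n * ((INR (S n) + 1) * sqrt (PI * INR (S n))) =
  central_ratio (S n) * sqrt (PI * INR (S n)).
Proof.
  intros Hrho. unfold defect_step. rewrite S_INR.
  assert (0 < rho ^ S n) by (apply pow_lt; lra). pose proof (pos_INR n).
  field. lra.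
Qed.

Lemma defect_scaled_bounds a b n : a + b = 1 -> 0 < b -> b < a ->
  let rho := 4 * a * b in
  let s := central_ratio (S n) * sqrt (PI * INR (S n)) in
  s * ((1 - rho) / (1 - step_ratio rho n)) <=
  defect a b n * (1 - rho) / rho ^ S n * ((INR (S n) + 1) * sqrt (PI * INR (S n))) <= s.
Proof.
  intros Hab Hb Hba rho s.
  pose proof (rho_bounds a b Hab Hb Hba) as Hrho. fold rho in Hrho.
  pose proof (defect_bounds a b n Hab Hb Hba) as [Hlo Hup]. fold rho in Hlo, Hup.
  pose proof (step_ratio_bounds rho n ltac:(lra)) as [[_ Hr] Hr'].
  pose proof (defect_step_scaled rho n (proj1 Hrho)) as Hscaled. fold s in Hscaled.
  set (D := (INR (S n) + 1) * sqrt (PI * INR (S n))) in *.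
  assert (0 < D).
  { unfold D. pose proof PI_RGT_0. pose proof (lt_0_INR (S n) ltac:(lia)).
    apply Rmult_lt_0_compat; [lra|]. apply sqrt_lt_R0. nra. }
  assert (Hpow : 0 < rho ^ S n) by (apply pow_lt; lra).
  assert (Hf : 0 < (1 - rho) / rho ^ S n * D) by (apply Rmult_lt_0_compat;
    [apply Rdiv_lt_0_compat|]; lra).
  replace (defect a b n * (1 - rho) / rho ^ S n * D)
    with (defect a b n * ((1 - rho) / rho ^ S n * D)) by (field; lra).
  split.
  - replace (s * ((1 - rho) / (1 - step_ratio rho n)))
      with (defect_step rho n / (1 - step_ratio rho n) * ((1 - rho) / rho ^ S n * D))
      by (rewrite <- Hscaled; field; lra).
    apply Rmult_le_compat_r; lra.
  - replace s with (defect_step rho n / (1 - rho) * ((1 - rho) / rho ^ S n * D))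
      by (rewrite <- Hscaled; field; lra).
    apply Rmult_le_compat_r; lra.
Qed.

Lemma defect_rel_error a b n : a + b = 1 -> 0 < b -> b < a ->
  let rho := 4 * a * b in
  Rabs (defect a b n * (1 - rho) / rho ^ S n * ((INR (S n) + 1) * sqrt (PI * INR (S n))) - 1)
  <= (/ 2 + 3 / (2 * (1 - rho))) / INR (S n).
Proof.
  intros Hab Hb Hba rho.
  pose proof (rho_bounds a b Hab Hb Hba) as Hrho. fold rho in Hrho.
  pose proof (defect_scaled_bounds a b n Hab Hb Hba) as [Hy_lo Hy_hi]. fold rho in Hy_lo, Hy_hi.
  pose proof (central_ratio_sqrt_bounds (S n) ltac:(lia)) as [Hs0 Hs1].
  pose proof (step_ratio_gap rho n ltac:(lra)) as [Hth0 Hth1].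
  set (x := INR (S n)) in *. assert (Hx : 1 <= x) by (apply (le_INR 1); lia).
  set (s := central_ratio (S n) * sqrt (PI * x)) in *.
  set (th := (1 - rho) / (1 - step_ratio rho n)) in *.
  set (y := defect a b n * (1 - rho) / rho ^ S n * ((x + 1) * sqrt (PI * x))) in *.
  assert (Hv : 0 <= 3 / (2 * x * (1 - rho))) by (apply Rdiv_le_0_compat; nra).
  replace ((/ 2 + 3 / (2 * (1 - rho))) / x) with (/ (2 * x) + 3 / (2 * x * (1 - rho)))
    by (field; lra).
  apply Rabs_le. split; nra.
Qed.

Lemma little_o_N32_of_rel_error (r y : nat -> R) (c C : R) :
  (forall N, (1 <= N)%nat -> r N = c * (y N - 1) / ((INR N + 1) * sqrt (PI * INR N))) ->
  (forall N, (1 <= N)%nat -> Rabs (y N - 1) <= C / INR N) ->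
  little_o_N32 r.
Proof.
  intros Hr Hy eps Heps.
  destruct (INR_archimed eps (Rabs c * Rabs C) Heps) as [N0 HN0].
  exists (S N0). intros N HN. rewrite Hr by lia.
  assert (Hx : INR N0 < INR N) by (apply lt_INR; lia).
  assert (Hx1 : 1 <= INR N) by (apply (le_INR 1); lia).
  assert (Hsq : 1 <= sqrt (INR N)) by (rewrite <- sqrt_1; apply sqrt_le_1_alt; lra).
  assert (Hsqpi : sqrt (INR N) <= sqrt (PI * INR N))
    by (apply sqrt_le_1_alt; pose proof PI_RGT_0; pose proof PI2_1; nra).
  set (D := (INR N + 1) * sqrt (PI * INR N)).
  assert (HD : INR N * sqrt (INR N) <= D) by (unfold D; nra).
  assert (HD0 : 0 < INR N * sqrt (INR N)) by nra.
  pose proof (Hy N ltac:(lia)) as HyN.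
  assert (HC : Rabs (y N - 1) <= Rabs C / INR N).
  { eapply Rle_trans; [exact HyN|]. unfold Rdiv. apply Rmult_le_compat_r; [|apply Rle_abs].
    left; apply Rinv_0_lt_compat; lra. }
  unfold Rdiv. rewrite Rabs_mult, Rabs_mult, Rabs_inv, (Rabs_pos_eq D) by nra.
  apply Rle_trans with (Rabs c * (Rabs C / INR N) * / (INR N * sqrt (INR N))).
  - apply Rmult_le_compat; try (apply Rmult_le_pos; apply Rabs_pos);
      try (left; apply Rinv_0_lt_compat; nra).
    + apply Rmult_le_compat_l; [apply Rabs_pos|exact HC].
    + apply Rinv_le_contravar; lra.
  - apply Rmult_le_compat_r; [left; apply Rinv_0_lt_compat; lra|].
    replace (Rabs c * (Rabs C / INR N)) with (Rabs c * Rabs C / INR N) by (field; lra).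
    apply Rle_div_l; [lra|]. pose proof (pos_INR N0). nra.
Qed.

Lemma defect_little_o a b c : a + b = 1 -> 0 < b -> b < a ->
  little_o_N32 (fun N => c * defect a b (pred N) / ((4 * a * b) ^ N / (a - b) ^ 2)
                         - c / ((INR N + 1) * sqrt (PI * INR N))).
Proof.
  intros Hab Hb Hba. pose proof (rho_bounds a b Hab Hb Hba).
  apply (little_o_N32_of_rel_error _
    (fun N => defect a b (pred N) * (1 - 4 * a * b) / (4 * a * b) ^ N *
              ((INR N + 1) * sqrt (PI * INR N)))
    c (/ 2 + 3 / (2 * (1 - 4 * a * b)))).
  - intros [|n] HN; [lia|]. rewrite <- one_sub_rho by auto. simpl pred.
    assert (0 < sqrt (PI * INR (S n))).
    { apply sqrt_lt_R0. pose proof PI_RGT_0. pose proof (lt_0_INR (S n) ltac:(lia)). nra. }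
    assert (0 < (4 * a * b) ^ S n) by (apply pow_lt; lra).
    pose proof (pos_INR (S n)). field. repeat split; lra.
  - intros [|n] HN; [lia|]. apply defect_rel_error; auto.
Qed.

(** * Thermal weights and the theorem *)

Lemma tvd_two_levels d i j q p : (i < d)%nat -> (j < d)%nat -> i <> j ->
  (forall c, (c < d)%nat -> c <> i -> c <> j -> q c = p c) -> q i + q j = p i + p j ->
  tvd d q p = Rabs (q i - p i).
Proof.
  intros Hi Hj Hij Hoff Hsum. unfold tvd.
  rewrite (sumR_two d i j) by (auto; intros c Hc Hci Hcj; rewrite Hoff, Rminus_diag by auto;
    apply Rabs_R0).
  replace (q j - p j) with (- (q i - p i)) by lra. rewrite Rabs_Ropp. field.
Qed.

Lemma gibbs_pos beta E d c : (0 < d)%nat -> 0 < gibbs beta E d c.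
Proof.
  intros Hd. unfold gibbs. apply Rdiv_lt_0_compat; [apply exp_pos|].
  apply sumR_pos; auto. intros; apply exp_pos.
Qed.

Lemma gibbs_ratio beta E d i j : (0 < d)%nat ->
  gibbs beta E d j / gibbs beta E d i = exp (- beta * (E j - E i)).
Proof.
  intros Hd. pose proof (gibbs_pos beta E d i Hd). unfold gibbs in *.
  assert (0 < sumR d (fun b => exp (- beta * E b)))
    by (apply sumR_pos; auto; intros; apply exp_pos).
  replace (- beta * (E j - E i)) with (- beta * E j + - (- beta * E i)) by ring.
  rewrite exp_plus, exp_Ropp. pose proof (exp_pos (- beta * E i)). field. lra.
Qed.

Section ThermalPair.

Variables (beta : R) (E : nat -> R) (d i j : nat).
Hypotheses (Hd : (0 < d)%nat) (Hbeta : 0 < beta) (Hij : i <> j) (HE : E i < E j).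

Let a := gibbs beta E d i / (gibbs beta E d i + gibbs beta E d j).
Let b := gibbs beta E d j / (gibbs beta E d i + gibbs beta E d j).

Lemma thermal_pair_props :
  a + b = 1 /\ 0 < b /\ b < a /\ exp (- beta * (E j - E i)) = b / a.
Proof.
  pose proof (gibbs_pos beta E d i Hd). pose proof (gibbs_pos beta E d j Hd).
  assert (Hswap : exp (- beta * (E j - E i)) = b / a)
    by (rewrite <- (gibbs_ratio beta E d i j Hd); unfold a, b; field; lra).
  assert (Hexp : exp (- beta * (E j - E i)) < 1).
  { rewrite <- exp_0. apply exp_increasing.
    assert (0 < beta * (E j - E i)) by (apply Rmult_lt_0_compat; lra). lra. }
  assert (0 < a) by (unfold a; apply Rdiv_lt_0_compat; lra).
  rewrite Hswap in Hexp. apply Rlt_div_l in Hexp; [|lra].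
  repeat split; [unfold a, b; field; lra|unfold b; apply Rdiv_lt_0_compat; lra|lra|auto].
Qed.

Lemma thermal_ratios_jointGamma N : (0 < N)%nat ->
  thermal_ratios (jointGamma beta E d N) N i j a b.
Proof.
  intros HN k l Hk Hl. unfold jointGamma. rewrite !tensorU_block by auto.
  pose proof (gibbs_pos beta E d i Hd). pose proof (gibbs_pos beta E d j Hd).
  pose proof (lt_0_INR N HN). unfold a, b. split; field; repeat split; lra.
Qed.

Lemma tvd_protocol_betaswap n p : (i < d)%nat -> (j < d)%nat ->
  tvd d (marginal (S n) (Pprot beta E d (S n) i j (tensorU (S n) p))) (betaswap beta E i j p) =
  Rabs (p i * b - p j * a) * defect a b n.
Proof.
  intros Hi Hj. destruct thermal_pair_props as (Hab & Hb & Hba & Hswap).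
  pose proof (thermal_ratios_jointGamma (S n) ltac:(lia)) as HG.
  unfold Pprot, memTherm, Ptilde.
  rewrite (tvd_two_levels d i j); auto; rewrite ?marginal_tensorU by lia.
  - rewrite (marginal_rounds_i _ n i j a b p) by auto.
    unfold betaswap. rewrite Nat.eqb_refl, Hswap.
    transitivity (Rabs ((p i * b - p j * a) * defect a b n)); [f_equal; ring|].
    rewrite Rabs_mult, (Rabs_pos_eq (defect a b n)) by (apply defect_nonneg; auto).
    reflexivity.
  - intros c Hc Hci Hcj. rewrite marginal_tensorU, marginal_rounds_other by (auto || lia).
    unfold betaswap. destruct (Nat.eqb_spec c i), (Nat.eqb_spec c j); congruence.
  - rewrite (marginal_rounds_conserved _ n i j a b) by auto.
    unfold betaswap. rewrite !Nat.eqb_refl. destruct (Nat.eqb_spec j i); [congruence|]. ring.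
Qed.

End ThermalPair.

Theorem theorem2 :
  forall (d : nat) (beta : R) (E : nat -> R) (i j : nat) (p : nat -> R),
    (2 <= d)%nat -> 0 < beta ->
    (i < d)%nat -> (j < d)%nat -> i <> j -> E i < E j ->
    (forall a, (a < d)%nat -> 0 <= p a) -> sumR d p = 1 ->
    let Gi := gibbs beta E d i / (gibbs beta E d i + gibbs beta E d j) in
    let Gj := gibbs beta E d j / (gibbs beta E d i + gibbs beta E d j) in
    let q := fun N : nat => marginal N (Pprot beta E d N i j (tensorU N p)) in
    exists r : nat -> R,
      little_o_N32 r /\
      forall N : nat, (1 <= N)%nat ->
        (forall x : nat, (x < d * N)%nat ->
           Pprot beta E d N i j (tensorU N p) x = tensorU N (q N) x) /\
        tvd d (q N) (betaswap beta E i j p) =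
          (4 * Gi * Gj) ^ N / (Gi - Gj) ^ 2 *
          (Rabs (p i * Gj - p j * Gi) / ((INR N + 1) * sqrt (PI * INR N)) + r N).
Proof.
  intros d beta E i j p Hd Hbeta Hi Hj Hij HE _ _ a b q.
  destruct (thermal_pair_props beta E d i j ltac:(lia) Hbeta HE) as (Hab & Hb & Hba & _).
  fold a b in Hab, Hb, Hba.
  set (c := Rabs (p i * b - p j * a)).
  set (pref := fun N => (4 * a * b) ^ N / (a - b) ^ 2).
  exists (fun N => c * defect a b (pred N) / pref N - c / ((INR N + 1) * sqrt (PI * INR N))).
  split; [apply defect_little_o; auto|].
  intros [|n] HN; [lia|]. split.
  - intros x _. unfold tensorU at 2. unfold q, Pprot, memTherm.
    rewrite marginal_tensorU by lia. reflexivity.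
  - unfold q. rewrite tvd_protocol_betaswap by (auto || lia). fold a b c. simpl pred.
    pose proof (rho_bounds a b Hab Hb Hba).
    assert (0 < pref (S n)) by (unfold pref; apply Rdiv_lt_0_compat; apply pow_lt; lra).
    change ((4 * a * b) ^ S n / (a - b) ^ 2) with (pref (S n)). rewrite Rplus_minus.
    field. lra.
Qed.
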